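(* Fix $0<B<1$ and $H>0$, let $x(s),z(s)$ be as follows: $$x(s)=\frac1H\sqrt{1+B^2+2B\sin\!\big(Hs+\tfrac{3\pi}{2}\big)},\qquad z(s)=\int_{3\pi/(2H)}^{\,s+3\pi/(2H)}\frac{1+B\sin(Ht)}{\sqrt{1+B^2+2B\sin(Ht)}}\,dt ,$$ let $s_0=\frac1H\arccos B$ be the smallest positive zero of $x''$, let $g(s)=x(s)-\frac{x'(s)}{z'(s)}z(s)$, and set $z_0=\frac{1-B^2}{HB}$. Then: (i) if $z(s_0)<z_0$, then $g(s)>0$ for all $s\in(0,s_0)$; (ii) if $z(s_0)\ge z_0$, then there is $\bar s\in(0,s_0]$ with $g(\bar s)=g(-\bar s)=0$; with $R_0^2=x(\bar s)^2+z(\bar s)^2$, the surface $\Sigma$ obtained by rotating $\beta|_{[-\bar s,\bar s]}$, $\beta=(x,0,z)$, about the $z$-axis is a free boundary CMC annulus in the ball $\mathbb B^3_{R_0}$ of radius $R_0$ centered at the origin, and it satisfies, at every point, $$|\Phi|^2\langle\vec x,N\rangle^2\le\tfrac12\big(2+H\langle\vec x,N\rangle\big)^2,$$ with $N=(-z'\cos\theta,-z'\sin\theta,x')$ at the point $(x(s)\cos\theta,x(s)\sin\theta,z(s))$.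
   Context: Free boundary in a ball $\mathbb B^3_{R}$: interior in the open ball, boundary on the sphere of radius $R$, meeting it orthogonally. Conventions: shape operator $A$ w.r.t. $N$ defined by $\langle A(Y),Z\rangle=\langle\bar\nabla_YZ,N\rangle$; mean curvature $H=\operatorname{tr}A$ (unnormalized; for this unduloid it equals the constant $H$); $\Phi=\Pi-\frac H2g_\Sigma$, $|\Phi|^2=|A|^2-H^2/2$; $\vec x$ the position vector. *)

From Stdlib Require Import Reals Lra ClassicalEpsilon.
Open Scope R_scope.

(** Total versions of the derivative and of the Riemann integral, chosen by
    Hilbert's epsilon.  When [f] is differentiable at [s] (resp. Riemann
    integrable on [a,b]) these are the usual derivative (resp. integral, with
    orientation: [RInt f b a = - RInt f a b]). *)
Definition deriv (f : R -> R) (s : R) : R :=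
  epsilon (inhabits 0) (fun l => derivable_pt_lim f s l).

Definition RInt (f : R -> R) (a b : R) : R :=
  epsilon (inhabits 0)
    (fun I => forall pr : Riemann_integrable f a b, RiemannInt pr = I).

Definition xu (B H s : R) : R :=
  / H * sqrt (1 + B ^ 2 + 2 * B * sin (H * s + 3 * PI / 2)).

Definition zu_integrand (B H t : R) : R :=
  (1 + B * sin (H * t)) / sqrt (1 + B ^ 2 + 2 * B * sin (H * t)).

Definition zu (B H s : R) : R :=
  RInt (zu_integrand B H) (3 * PI / (2 * H)) (s + 3 * PI / (2 * H)).

Definition s0 (B H : R) : R := / H * acos B.

Definition gu (B H s : R) : R :=
  xu B H s - deriv (xu B H) s / deriv (zu B H) s * zu B H s.

Definition z0 (B H : R) : R := (1 - B ^ 2) / (H * B).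

Definition V3 : Type := (R * R * R)%type.
Definition mk3 (a b c : R) : V3 := (a, b, c).
Definition c1 (v : V3) : R := fst (fst v).
Definition c2 (v : V3) : R := snd (fst v).
Definition c3 (v : V3) : R := snd v.
Definition dot (u v : V3) : R := c1 u * c1 v + c2 u * c2 v + c3 u * c3 v.

Definition d_s (X : R -> R -> V3) (s th : R) : V3 :=
  mk3 (deriv (fun u => c1 (X u th)) s)
      (deriv (fun u => c2 (X u th)) s)
      (deriv (fun u => c3 (X u th)) s).
Definition d_th (X : R -> R -> V3) (s th : R) : V3 :=
  mk3 (deriv (fun u => c1 (X s u)) th)
      (deriv (fun u => c2 (X s u)) th)
      (deriv (fun u => c3 (X s u)) th).

Definition fE X s th := dot (d_s X s th) (d_s X s th).
Definition fF X s th := dot (d_s X s th) (d_th X s th).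
Definition fG X s th := dot (d_th X s th) (d_th X s th).

(** Second fundamental form w.r.t. the normal field N, with the convention
    <A(Y),Z> = <Dbar_Y Z, N>, i.e. II_ij = <X_ij, N>. *)
Definition IIss X (N : R -> R -> V3) s th := dot (d_s (d_s X) s th) (N s th).
Definition IIst X (N : R -> R -> V3) s th := dot (d_th (d_s X) s th) (N s th).
Definition IIts X (N : R -> R -> V3) s th := dot (d_s (d_th X) s th) (N s th).
Definition IItt X (N : R -> R -> V3) s th := dot (d_th (d_th X) s th) (N s th).

(** Shape operator matrix W = g^{-1} II (acting on coordinates) *)
Definition detg X s th := fE X s th * fG X s th - fF X s th ^ 2.
Definition W11 X N s th :=
  (fG X s th * IIss X N s th - fF X s th * IIts X N s th) / detg X s th.
Definition W12 X N s th :=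
  (fG X s th * IIst X N s th - fF X s th * IItt X N s th) / detg X s th.
Definition W21 X N s th :=
  (- fF X s th * IIss X N s th + fE X s th * IIts X N s th) / detg X s th.
Definition W22 X N s th :=
  (- fF X s th * IIst X N s th + fE X s th * IItt X N s th) / detg X s th.

(** Mean curvature H = tr A (unnormalized) *)
Definition meanH X N s th := W11 X N s th + W22 X N s th.
(** |A|^2 = tr (A^2) *)
Definition normA2 X N s th :=
  W11 X N s th ^ 2 + 2 * W12 X N s th * W21 X N s th + W22 X N s th ^ 2.
(** |Phi|^2 = |A|^2 - H^2/2, Phi = II - (H/2) g *)
Definition normPhi2 X N s th := normA2 X N s th - meanH X N s th ^ 2 / 2.

Definition rev (x z : R -> R) (s th : R) : V3 :=
  mk3 (x s * cos th) (x s * sin th) (z s).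
Definition revN (x z : R -> R) (s th : R) : V3 :=
  mk3 (- deriv z s * cos th) (- deriv z s * sin th) (deriv x s).

(** The surface obtained by rotating beta|[-a,a] about the z-axis is a
    free boundary CMC annulus (mean curvature Hc w.r.t. N = revN) in the
    ball of radius R0 centred at the origin:
    - it is an (embedded) annulus: a > 0, x > 0 on [-a,a], beta injective
      on [-a,a], and the parametrization is an immersion with N a unit normal;
    - constant mean curvature Hc at every point;
    - interior in the open ball, boundary (s = -a, a) on the sphere;
    - it meets the sphere orthogonally along the boundary (N is tangent to
      the sphere there, i.e. <x_vec, N> = 0). *)
Definition free_boundary_CMC_annulus_rev (x z : R -> R) (a Hc R0 : R) : Prop :=
  let X := rev x z in
  let N := revN x z in
  0 < a /\ 0 < R0 /\
  (forall s, -a <= s <= a -> 0 < x s) /\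
  (forall s1 s2, -a <= s1 <= a -> -a <= s2 <= a ->
      x s1 = x s2 -> z s1 = z s2 -> s1 = s2) /\
  (forall s th, -a <= s <= a ->
      0 < detg X s th /\
      dot (N s th) (N s th) = 1 /\
      dot (N s th) (d_s X s th) = 0 /\
      dot (N s th) (d_th X s th) = 0) /\
  (forall s th, -a <= s <= a -> meanH X N s th = Hc) /\
  (forall s th, -a < s < a -> dot (X s th) (X s th) < R0 ^ 2) /\
  (forall th, dot (X a th) (X a th) = R0 ^ 2 /\
              dot (X (-a) th) (X (-a) th) = R0 ^ 2) /\
  (forall th, dot (X a th) (N a th) = 0 /\ dot (X (-a) th) (N (-a) th) = 0).

(** The unduloid profile beta = (x, 0, z) has elementary closed forms: with
    rho(s) = sqrt (1 + B^2 - 2 B cos (H s)) one has x = rho / H,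
    x' = B sin (H s) / rho, z' = (1 - B cos (H s)) / rho, so beta is
    parametrised by arc length, z is odd and increasing, and its curvature
    k = x'' z' - x' z'' equals H B (cos (H s) - B) / rho^2.

    For g = x - (x'/z') z one computes g' = - z k / z'^2, hence g is even,
    positive at 0, nonincreasing on [0, s0] (where k >= 0), and
    g(s0) = B (z0 - z(s0)) / sqrt (1 - B^2).  This gives case (i) at once,
    and in case (ii) the intermediate value theorem produces the zero sb.

    The geometric part rests on the first and second fundamental forms of a
    general surface of revolution of a unit-speed profile (a section of its
    own): the principal curvatures are -k and z'/x, which for the unduloid
    sum to H.  The support function <X, N> = - z' g vanishes exactly where g
    does, which gives orthogonality at the boundary; the pinching estimate
    reduces to an elementary inequality in B, cos (H s) and a = - H <X, N>. *)

From Pilot Require Import Defs.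
From Stdlib Require Import Reals Lra ClassicalEpsilon FunctionalExtensionality.
From Coquelicot Require Import Coquelicot.
Open Scope R_scope.

Lemma deriv_eq (f : R -> R) (s l : R) : is_derive f s l -> deriv f s = l.
Proof.
  intro Hd. apply is_derive_Reals in Hd. unfold deriv.
  pose proof (epsilon_spec (inhabits 0) (fun l => derivable_pt_lim f s l)
                (ex_intro _ l Hd)) as He.
  exact (uniqueness_limite f s _ _ He Hd).
Qed.

Lemma RInt_continuous (f : R -> R) (a b : R) :
  (forall t, continuity_pt f t) -> Defs.RInt f a b = RInt f a b.
Proof.
  intro Hc.
  assert (pr : Riemann_integrable f a b).
  { destruct (Rle_lt_dec a b).
    - apply continuity_implies_RiemannInt; auto.
    - apply RiemannInt_P1, continuity_implies_RiemannInt; auto; lra. }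
  transitivity (RiemannInt pr); [|symmetry; apply RInt_Reals].
  unfold Defs.RInt.
  assert (Ex : exists I, forall pr' : Riemann_integrable f a b, RiemannInt pr' = I).
  { exists (RiemannInt pr). intro pr'. apply RiemannInt_P5. }
  symmetry. exact (epsilon_spec (inhabits 0) _ Ex pr).
Qed.

Lemma mvt (f f' : R -> R) (a b : R) : (forall u, is_derive f u (f' u)) -> a < b ->
  exists c, a < c < b /\ f b - f a = f' c * (b - a).
Proof.
  intros Hd hab. destruct (MVT_cor2 f f' a b hab) as [c [Hc1 Hc2]].
  - intros c _. apply is_derive_Reals. apply Hd.
  - exists c. split; auto.
Qed.

Lemma increasing_of_pos_derive (f f' : R -> R) :
  (forall u, is_derive f u (f' u)) -> (forall u, 0 < f' u) ->
  forall a b, a < b -> f a < f b.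
Proof.
  intros Hd Hp a b hab. destruct (mvt f f' a b Hd hab) as [c [_ E]].
  pose proof (Hp c). nra.
Qed.

Lemma odd_of_even_derive (f f' : R -> R) :
  (forall u, is_derive f u (f' u)) -> (forall u, f' (- u) = f' u) -> f 0 = 0 ->
  forall s, f (- s) = - f s.
Proof.
  intros Hd Hev H0 s.
  set (h := fun u => f u + f (- u)).
  assert (Hh : forall u, is_derive h u 0).
  { intro u. unfold h.
    replace 0 with (f' u + -1 * f' (- u)) by (rewrite Hev; ring).
    apply (is_derive_plus (V := R_NormedModule)); [apply Hd|].
    apply (is_derive_comp f (fun u => - u)); [apply Hd|].
    auto_derive; auto; ring. }
  assert (hs : h s = h 0).
  { destruct (Rtotal_order 0 s) as [lt|[eq|gt]].
    - destruct (mvt h (fun _ => 0) 0 s Hh lt) as [c [_ E]]. lra.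
    - now subst.
    - destruct (mvt h (fun _ => 0) s 0 Hh gt) as [c [_ E]]. lra. }
  unfold h in hs. rewrite Ropp_0, H0 in hs. lra.
Qed.

(** [revolve a b p q] is (s, th) |-> (a(s) p(th), a(s) q(th), b(s)); the
    surface [rev x z] is [revolve x z cos sin], and all its partial
    derivatives have this shape. *)
Definition revolve (a b p q : R -> R) : R -> R -> V3 :=
  fun s th => mk3 (a s * p th) (a s * q th) (b s).

Lemma d_s_revolve (a b p q a' b' : R -> R) :
  (forall u, is_derive a u (a' u)) -> (forall u, is_derive b u (b' u)) ->
  d_s (revolve a b p q) = revolve a' b' p q.
Proof.
  intros Ha Hb. do 2 (apply functional_extensionality; intro).
  unfold d_s, revolve, Defs.c1, c2, c3, mk3; simpl.
  rewrite !(fun k => deriv_eq (fun u => a u * k) _ (a' _ * k)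
                        (is_derive_scal_l _ _ _ k (Ha _))), (deriv_eq _ _ _ (Hb _)).
  reflexivity.
Qed.

Lemma d_th_revolve (a b p q p' q' : R -> R) :
  (forall u, is_derive p u (p' u)) -> (forall u, is_derive q u (q' u)) ->
  d_th (revolve a b p q) = revolve a (fun _ => 0) p' q'.
Proof.
  intros Hp Hq. do 2 (apply functional_extensionality; intro).
  unfold d_th, revolve, Defs.c1, c2, c3, mk3; simpl.
  rewrite !(fun k => deriv_eq (fun u => k * p u) _ _ (is_derive_scal _ _ k _ (Hp _))),
          (deriv_eq (fun u => _ * q u) _ _ (is_derive_scal _ _ _ _ (Hq _))),
          (deriv_eq _ _ _ (is_derive_const (K := R_AbsRing) (V := R_NormedModule) _ _)).
  reflexivity.
Qed.

Lemma dot_revolve (a b c d p q p' q' : R -> R) (s th : R) :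
  dot (revolve a b p q s th) (revolve c d p' q' s th)
  = a s * c s * (p th * p' th + q th * q' th) + b s * d s.
Proof. unfold dot, revolve, Defs.c1, c2, c3, mk3; simpl; ring. Qed.

Lemma trig_unit (t : R) : cos t * cos t + sin t * sin t = 1.
Proof. pose proof (sin2_cos2 t) as E. unfold Rsqr in E. lra. Qed.

Lemma sin_sq (t : R) : sin t ^ 2 = 1 - cos t ^ 2.
Proof. pose proof (trig_unit t). nra. Qed.

Definition curvature (x1 z1 x2 z2 : R -> R) (s : R) : R := x2 s * z1 s - x1 s * z2 s.

Section Revolution.
Variables x z x1 z1 x2 z2 : R -> R.
Hypothesis dx : forall s, is_derive x s (x1 s).
Hypothesis dz : forall s, is_derive z s (z1 s).
Hypothesis dx1 : forall s, is_derive x1 s (x2 s).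
Hypothesis dz1 : forall s, is_derive z1 s (z2 s).
Hypothesis unit_speed : forall s, x1 s ^ 2 + z1 s ^ 2 = 1.
Hypothesis x_pos : forall s, 0 < x s.

Let X := rev x z.
Let N := revN x z.
Let k := curvature x1 z1 x2 z2.

Lemma revN_revolve : N = revolve (fun s => - z1 s) x1 cos sin.
Proof.
  do 2 (apply functional_extensionality; intro).
  unfold N, revN. rewrite (deriv_eq _ _ _ (dx _)), (deriv_eq _ _ _ (dz _)). reflexivity.
Qed.

Lemma d_s_rev : d_s X = revolve x1 z1 cos sin.
Proof. exact (d_s_revolve x z cos sin x1 z1 dx dz). Qed.

Lemma d_th_rev : d_th X = revolve x (fun _ => 0) (fun t => - sin t) cos.
Proof.
  apply d_th_revolve; intro u;
    [apply is_derive_Reals, derivable_pt_lim_cos|apply is_derive_Reals, derivable_pt_lim_sin].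
Qed.

Lemma rev_first_form (s th : R) :
  fE X s th = 1 /\ fF X s th = 0 /\ fG X s th = x s ^ 2.
Proof.
  unfold fE, fF, fG. rewrite d_s_rev, d_th_rev, !dot_revolve.
  pose proof (unit_speed s). pose proof (trig_unit th).
  repeat split; nra.
Qed.

Lemma rev_second_form (s th : R) :
  IIss X N s th = - k s /\ IIst X N s th = 0 /\ IIts X N s th = 0 /\
  IItt X N s th = x s * z1 s.
Proof.
  assert (dss : d_s (d_s X) = revolve x2 z2 cos sin)
    by (rewrite d_s_rev; exact (d_s_revolve _ _ _ _ _ _ dx1 dz1)).
  assert (dts : d_th (d_s X) = revolve x1 (fun _ => 0) (fun t => - sin t) cos).
  { rewrite d_s_rev. apply d_th_revolve; intro u;
      [apply is_derive_Reals, derivable_pt_lim_cos|apply is_derive_Reals, derivable_pt_lim_sin]. }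
  assert (dst : d_s (d_th X) = revolve x1 (fun _ => 0) (fun t => - sin t) cos).
  { rewrite d_th_rev. apply d_s_revolve; [exact dx|].
    intro u. exact (is_derive_const (K := R_AbsRing) (V := R_NormedModule) 0 u). }
  assert (dtt : d_th (d_th X) = revolve x (fun _ => 0) (fun t => - cos t) (fun t => - sin t)).
  { rewrite d_th_rev. apply d_th_revolve; intro u;
      [apply is_derive_Reals, derivable_pt_lim_opp, derivable_pt_lim_sin
      |apply is_derive_Reals, derivable_pt_lim_cos]. }
  unfold IIss, IIst, IIts, IItt, k, curvature.
  rewrite dss, dts, dst, dtt, revN_revolve, !dot_revolve.
  repeat split; ring_simplify; rewrite ?sin_sq; ring.
Qed.

Lemma rev_normal_frame (s th : R) :
  0 < detg X s th /\ dot (N s th) (N s th) = 1 /\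
  dot (N s th) (d_s X s th) = 0 /\ dot (N s th) (d_th X s th) = 0.
Proof.
  destruct (rev_first_form s th) as [hE [hF hG]].
  unfold detg. rewrite hE, hF, hG, revN_revolve, d_s_rev, d_th_rev, !dot_revolve.
  pose proof (unit_speed s). pose proof (x_pos s).
  repeat split; ring_simplify; rewrite ?sin_sq; [nra|lra|ring|ring].
Qed.

Lemma rev_shape_operator (s th : R) :
  W11 X N s th = - k s /\ W12 X N s th = 0 /\ W21 X N s th = 0 /\
  W22 X N s th = z1 s / x s.
Proof.
  destruct (rev_first_form s th) as [hE [hF hG]].
  destruct (rev_second_form s th) as [hss [hst [hts htt]]].
  pose proof (x_pos s).
  unfold W11, W12, W21, W22, detg.
  rewrite hE, hF, hG, hss, hst, hts, htt. repeat split; field; lra.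
Qed.

Lemma rev_meanH (s th : R) : meanH X N s th = z1 s / x s - k s.
Proof.
  destruct (rev_shape_operator s th) as [w11 [_ [_ w22]]].
  unfold meanH. rewrite w11, w22. ring.
Qed.

Lemma rev_normPhi2 (s th : R) : normPhi2 X N s th = (k s + z1 s / x s) ^ 2 / 2.
Proof.
  destruct (rev_shape_operator s th) as [w11 [w12 [w21 w22]]].
  unfold normPhi2, normA2, meanH. rewrite w11, w12, w21, w22.
  pose proof (x_pos s). field. lra.
Qed.

Lemma rev_position (s th : R) :
  dot (X s th) (X s th) = x s ^ 2 + z s ^ 2 /\
  dot (X s th) (N s th) = z s * x1 s - x s * z1 s.
Proof.
  change X with (revolve x z cos sin). rewrite revN_revolve, !dot_revolve, trig_unit.
  split; ring.
Qed.

End Revolution.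

Lemma sin_shift (t : R) : sin (t + 3 * PI / 2) = - cos t.
Proof.
  rewrite sin_plus. replace (3 * PI / 2) with (3 * (PI / 2)) by field.
  rewrite cos_3PI2, sin_3PI2. ring.
Qed.

Lemma cos_Hneg (H s : R) : cos (H * - s) = cos (H * s).
Proof. replace (H * - s) with (- (H * s)) by ring. apply cos_neg. Qed.

Lemma sin_Hneg (H s : R) : sin (H * - s) = - sin (H * s).
Proof. replace (H * - s) with (- (H * s)) by ring. apply sin_neg. Qed.

Lemma acos_facts (B : R) : 0 < B < 1 ->
  0 < acos B < PI /\ cos (acos B) = B /\ sin (acos B) = sqrt (1 - B ^ 2).
Proof.
  intros hB. pose proof (acos_bound B) as [a1 a2].
  assert (cB : cos (acos B) = B) by (apply cos_acos; lra).
  split; [|split; auto].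
  - split.
    + destruct (Req_dec (acos B) 0) as [e|e]; [|lra]. rewrite e, cos_0 in cB. lra.
    + destruct (Req_dec (acos B) PI) as [e|e]; [|lra]. rewrite e, cos_PI in cB. lra.
  - rewrite sin_acos by lra. f_equal. unfold Rsqr. ring.
Qed.

(** The algebraic core of the pinching estimate: with D = 1 + B^2 - 2 B c,
    0 <= a <= 1 - B c implies (1 - B^2) a / D <= 2 - a, because
    (1 - B c)^2 <= D. *)
Lemma pinching_inequality (B c a : R) : 0 < B < 1 -> -1 <= c <= 1 ->
  0 <= a <= 1 - B * c ->
  ((1 - B ^ 2) * a / (1 + B ^ 2 - 2 * B * c)) ^ 2 <= (2 - a) ^ 2.
Proof.
  intros hB hc ha. set (D := 1 + B ^ 2 - 2 * B * c).
  assert (hD : 0 < D) by (unfold D; assert (0 <= B * (1 - c)) by nra; nra).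
  assert (lo : 0 <= (1 - B ^ 2) * a / D).
  { apply Rmult_le_pos; [apply Rmult_le_pos; nra|]. left. apply Rinv_0_lt_compat. lra. }
  assert (hi : (1 - B ^ 2) * a / D <= 2 - a).
  { apply (Rmult_le_reg_r D); [lra|]. unfold Rdiv. rewrite Rmult_assoc, Rinv_l by lra.
    assert ((1 - B * c) ^ 2 <= D) by (unfold D; assert (0 <= 1 - c * c) by nra; nra).
    assert (a * (1 - B * c) <= (1 - B * c) ^ 2) by nra.
    replace ((1 - B ^ 2) * a * 1) with (2 * a * (1 - B * c) - a * D) by (unfold D; ring).
    nra. }
  apply pow_incr. lra.
Qed.

Section Unduloid.
Variables B H : R.
Hypothesis hB : 0 < B < 1.
Hypothesis hH : 0 < H.

Lemma radicand_pos (s : R) : 0 < 1 + B ^ 2 - 2 * B * cos (H * s).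
Proof. pose proof (COS_bound (H * s)). nra. Qed.

(** rho(s) = |1 - B e^{i H s}|, so that x = rho / H. *)
Definition rho (s : R) : R := sqrt (1 + B ^ 2 - 2 * B * cos (H * s)).

Lemma rho_pos (s : R) : 0 < rho s.
Proof. apply sqrt_lt_R0, radicand_pos. Qed.

Lemma rho_sq (s : R) : rho s ^ 2 = 1 + B ^ 2 - 2 * B * cos (H * s).
Proof. apply pow2_sqrt. left. apply radicand_pos. Qed.

Lemma rho_even (s : R) : rho (- s) = rho s.
Proof. unfold rho. rewrite cos_Hneg. reflexivity. Qed.

Lemma rho_derive (s : R) : is_derive rho s (B * H * sin (H * s) / rho s).
Proof.
  pose proof (radicand_pos s) as hD. pose proof (rho_pos s) as hr. unfold rho in *.
  auto_derive.
  - replace (1 + B * (B * 1) + - (2 * B * cos (H * s)))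
      with (1 + B ^ 2 - 2 * B * cos (H * s)) by ring. exact hD.
  - replace (1 + B * (B * 1) + - (2 * B * cos (H * s)))
      with (1 + B ^ 2 - 2 * B * cos (H * s)) by ring. field. lra.
Qed.

Lemma Derive_rho (s : R) : Derive rho s = B * H * sin (H * s) / rho s.
Proof. apply is_derive_unique, rho_derive. Qed.

Definition xp (s : R) : R := B * sin (H * s) / rho s.
Definition zp (s : R) : R := (1 - B * cos (H * s)) / rho s.
Definition xpp (s : R) : R :=
  B * H * cos (H * s) / rho s - B * sin (H * s) * (B * H * sin (H * s)) / rho s ^ 3.
Definition zpp (s : R) : R :=
  B * H * sin (H * s) / rho s - (1 - B * cos (H * s)) * (B * H * sin (H * s)) / rho s ^ 3.

Lemma xu_closed (s : R) : xu B H s = rho s / H.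
Proof.
  unfold xu, rho. rewrite sin_shift, Rmult_comm. unfold Rdiv.
  do 2 f_equal. ring.
Qed.

Lemma xu_derive (s : R) : is_derive (xu B H) s (xp s).
Proof.
  apply (is_derive_ext (fun u => rho u / H)); [intro; symmetry; apply xu_closed|].
  pose proof (rho_pos s). unfold xp. auto_derive.
  - eexists. apply rho_derive.
  - rewrite Derive_rho. field. lra.
Qed.

Lemma xp_derive (s : R) : is_derive xp s (xpp s).
Proof.
  pose proof (rho_pos s). unfold xp, xpp. auto_derive.
  - repeat split; try lra. eexists. apply rho_derive.
  - rewrite Derive_rho. field. lra.
Qed.

Lemma zp_derive (s : R) : is_derive zp s (zpp s).
Proof.
  pose proof (rho_pos s). unfold zp, zpp. auto_derive.
  - repeat split; try lra. eexists. apply rho_derive.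
  - rewrite Derive_rho. field. lra.
Qed.

Lemma integrand_continuous (t : R) : continuity_pt (zu_integrand B H) t.
Proof.
  apply continuity_pt_filterlim.
  apply (ex_derive_continuous (K := R_AbsRing) (V := R_NormedModule)).
  assert (hp : 0 < 1 + B ^ 2 + 2 * B * sin (H * t)) by (pose proof (SIN_bound (H * t)); nra).
  unfold zu_integrand. auto_derive.
  replace (1 + B * (B * 1) + 2 * B * sin (H * t)) with (1 + B ^ 2 + 2 * B * sin (H * t)) by ring.
  pose proof (sqrt_lt_R0 _ hp). repeat split; lra.
Qed.

(** The integral defining z starts at the shift 3 pi / (2 H), which turns the
    integrand into z'. *)
Lemma integrand_shift (s : R) : zu_integrand B H (s + 3 * PI / (2 * H)) = zp s.
Proof.
  unfold zu_integrand, zp, rho.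
  replace (H * (s + 3 * PI / (2 * H))) with (H * s + 3 * PI / 2) by (field; lra).
  rewrite sin_shift. f_equal; [ring | f_equal; ring].
Qed.

Lemma zu_RInt (s : R) :
  zu B H s = RInt (zu_integrand B H) (3 * PI / (2 * H)) (s + 3 * PI / (2 * H)).
Proof. apply RInt_continuous, integrand_continuous. Qed.

Lemma zu_derive (s : R) : is_derive (zu B H) s (zp s).
Proof.
  rewrite <- integrand_shift. set (c := 3 * PI / (2 * H)).
  apply (is_derive_ext (fun u => RInt (zu_integrand B H) c (u + c)));
    [intro; symmetry; apply zu_RInt|].
  replace (zu_integrand B H (s + c)) with (1 * zu_integrand B H (s + c)) by ring.
  apply (is_derive_comp (fun b => RInt (zu_integrand B H) c b) (fun u => u + c));
    [|auto_derive; auto].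
  apply (is_derive_RInt _ _ c).
  - apply filter_forall. intro b. apply (RInt_correct (V := R_CompleteNormedModule)).
    apply (ex_RInt_continuous (V := R_CompleteNormedModule)).
    intros t _. apply continuity_pt_filterlim, integrand_continuous.
  - apply continuity_pt_filterlim, integrand_continuous.
Qed.

Lemma zu_zero : zu B H 0 = 0.
Proof. rewrite zu_RInt, Rplus_0_l. exact (RInt_point (V := R_CompleteNormedModule) _ _). Qed.

Lemma unit_speed_profile (s : R) : xp s ^ 2 + zp s ^ 2 = 1.
Proof.
  pose proof (rho_pos s). pose proof (rho_sq s) as R2. pose proof (sin_sq (H * s)).
  unfold xp, zp. field_simplify_eq; [|lra]. rewrite R2. nra.
Qed.

Lemma curvature_closed (s : R) :
  curvature xp zp xpp zpp s = H * B * (cos (H * s) - B) / rho s ^ 2.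
Proof.
  pose proof (rho_pos s). pose proof (sin_sq (H * s)) as S.
  unfold curvature, xpp, xp, zp, zpp. field_simplify_eq; [|lra].
  rewrite S. ring.
Qed.

Lemma xu_pos (s : R) : 0 < xu B H s.
Proof.
  rewrite xu_closed. pose proof (rho_pos s).
  apply Rdiv_lt_0_compat; lra.
Qed.

Lemma zp_pos (s : R) : 0 < zp s.
Proof.
  pose proof (rho_pos s). pose proof (COS_bound (H * s)).
  apply Rdiv_lt_0_compat; nra.
Qed.

Lemma xu_even (s : R) : xu B H (- s) = xu B H s.
Proof. rewrite !xu_closed, rho_even. reflexivity. Qed.

Lemma xp_odd (s : R) : xp (- s) = - xp s.
Proof. unfold xp. rewrite rho_even, sin_Hneg. unfold Rdiv. ring. Qed.

Lemma zp_even (s : R) : zp (- s) = zp s.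
Proof. unfold zp. rewrite rho_even, cos_Hneg. reflexivity. Qed.

Lemma zu_odd (s : R) : zu B H (- s) = - zu B H s.
Proof. exact (odd_of_even_derive _ zp zu_derive zp_even zu_zero s). Qed.

Lemma zu_increasing (a b : R) : a < b -> zu B H a < zu B H b.
Proof. exact (increasing_of_pos_derive _ zp zu_derive zp_pos a b). Qed.

Lemma zu_pos (s : R) : 0 < s -> 0 < zu B H s.
Proof. intro hs. rewrite <- zu_zero. apply zu_increasing, hs. Qed.

Lemma principal_curvatures (s : R) :
  zp s / xu B H s - curvature xp zp xpp zpp s = H /\
  curvature xp zp xpp zpp s + zp s / xu B H s = H * (1 - B ^ 2) / rho s ^ 2.
Proof.
  pose proof (rho_pos s). pose proof (rho_sq s) as R2.
  rewrite curvature_closed, xu_closed. unfold zp.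
  split; field_simplify_eq; try lra; rewrite ?R2; ring.
Qed.

Lemma support_identity (s : R) : H * (xu B H s * zp s) = 1 - B * cos (H * s).
Proof.
  rewrite xu_closed. pose proof (rho_pos s). unfold zp. field. lra.
Qed.

Lemma H_s0 : H * s0 B H = acos B.
Proof. unfold s0. field. lra. Qed.

Lemma s0_pos : 0 < s0 B H.
Proof.
  destruct (acos_facts B hB) as [[a1 _] _]. unfold s0.
  apply Rmult_lt_0_compat; [apply Rinv_0_lt_compat|]; lra.
Qed.

Lemma first_arc (s : R) : 0 <= s <= s0 B H ->
  0 <= H * s <= acos B /\ B <= cos (H * s) /\ 0 <= sin (H * s).
Proof.
  intros [h1 h2]. destruct (acos_facts B hB) as [[a1 a2] [cB _]].
  assert (hs : 0 <= H * s <= acos B).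
  { rewrite <- H_s0. split; nra. }
  split; [exact hs|]. split.
  - rewrite <- cB at 1. apply cos_decr_1; lra.
  - apply sin_ge_0; lra.
Qed.

Lemma curvature_nonneg (s : R) : 0 <= s <= s0 B H -> 0 <= curvature xp zp xpp zpp s.
Proof.
  intros hs. rewrite curvature_closed. destruct (first_arc s hs) as [_ [hc _]].
  pose proof (rho_pos s). apply Rmult_le_pos; [|left; apply Rinv_0_lt_compat; nra].
  apply Rmult_le_pos; nra.
Qed.

Lemma xp_nonneg (s : R) : 0 <= s <= s0 B H -> 0 <= xp s.
Proof.
  intros hs. destruct (first_arc s hs) as [_ [_ hsn]]. pose proof (rho_pos s).
  unfold xp. apply Rmult_le_pos; [nra|left; apply Rinv_0_lt_compat; lra].
Qed.

Lemma xp_pos (s : R) : 0 < s < s0 B H -> 0 < xp s.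
Proof.
  intros hs. destruct (first_arc s ltac:(lra)) as [[a1 a2] _].
  destruct (acos_facts B hB) as [[b1 b2] _].
  assert (0 < sin (H * s)) by (apply sin_gt_0; [nra|]; rewrite <- H_s0 in *; nra).
  pose proof (rho_pos s). unfold xp. apply Rdiv_lt_0_compat; nra.
Qed.

Lemma gu_closed (s : R) : gu B H s = xu B H s - xp s / zp s * zu B H s.
Proof. unfold gu. rewrite (deriv_eq _ _ _ (xu_derive s)), (deriv_eq _ _ _ (zu_derive s)). reflexivity. Qed.

(** g' = - z k / z'^2: the x' z' terms cancel and only the curvature term remains. *)
Lemma gu_derive (s : R) :
  is_derive (gu B H) s (- zu B H s * curvature xp zp xpp zpp s / zp s ^ 2).
Proof.
  apply (is_derive_ext (fun u => xu B H u - xp u / zp u * zu B H u));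
    [intro; symmetry; apply gu_closed|].
  pose proof (zp_pos s).
  assert (E1 : Derive (fun u => xu B H u) s = xp s) by apply is_derive_unique, xu_derive.
  assert (E2 : Derive (fun u => xp u) s = xpp s) by apply is_derive_unique, xp_derive.
  assert (E3 : Derive (fun u => zp u) s = zpp s) by apply is_derive_unique, zp_derive.
  assert (E4 : Derive (fun u => zu B H u) s = zp s) by apply is_derive_unique, zu_derive.
  auto_derive.
  - split; [eexists; apply xu_derive|]. split; [eexists; apply xp_derive|].
    split; [eexists; apply zp_derive|]. split; [lra|].
    split; [eexists; apply zu_derive|exact I].
  - rewrite E1, E2, E3, E4. unfold curvature. field. lra.
Qed.

Lemma gu_even (s : R) : gu B H (- s) = gu B H s.
Proof. rewrite !gu_closed, xu_even, xp_odd, zp_even, zu_odd. unfold Rdiv. ring. Qed.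

Lemma gu_at_zero : 0 < gu B H 0.
Proof. rewrite gu_closed, zu_zero, Rmult_0_r, Rminus_0_r. apply xu_pos. Qed.

(** g is nonincreasing on the first arc, since z >= 0 and k >= 0 there. *)
Lemma gu_antitone (a b : R) : 0 <= a -> a <= b -> b <= s0 B H -> gu B H b <= gu B H a.
Proof.
  intros ha hab hb. destruct (Req_dec a b) as [->|hne]; [lra|].
  destruct (mvt (gu B H) _ a b gu_derive ltac:(lra)) as [c [[c1 c2] E]].
  pose proof (curvature_nonneg c ltac:(lra)). pose proof (zu_pos c ltac:(lra)).
  pose proof (zp_pos c).
  assert (0 <= zu B H c * curvature xp zp xpp zpp c / zp c ^ 2).
  { apply Rmult_le_pos; [nra|]. left. apply Rinv_0_lt_compat. nra. }
  assert (- zu B H c * curvature xp zp xpp zpp c / zp c ^ 2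
          = - (zu B H c * curvature xp zp xpp zpp c / zp c ^ 2)) by (unfold Rdiv; ring).
  nra.
Qed.

Lemma gu_at_s0 : gu B H (s0 B H) = B / sqrt (1 - B ^ 2) * (z0 B H - zu B H (s0 B H)).
Proof.
  destruct (acos_facts B hB) as [_ [cB sB]].
  assert (hm : 0 < 1 - B ^ 2) by nra.
  pose proof (sqrt_lt_R0 _ hm) as hm'. pose proof (pow2_sqrt _ (Rlt_le _ _ hm)) as hm2.
  assert (Er : rho (s0 B H) = sqrt (1 - B ^ 2)).
  { unfold rho. rewrite H_s0, cB. f_equal. ring. }
  rewrite gu_closed, xu_closed. unfold xp, zp, z0.
  rewrite Er, H_s0, cB, sB.
  set (Z := zu B H (s0 B H)). set (m := sqrt (1 - B ^ 2)) in *.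
  field_simplify_eq; [|repeat split; lra].
  rewrite hm2. ring.
Qed.

Lemma gu_pos_first_arc :
  zu B H (s0 B H) < z0 B H -> forall s, 0 < s < s0 B H -> gu B H s > 0.
Proof.
  intros hz s hs.
  assert (hm : 0 < 1 - B ^ 2) by nra. pose proof (sqrt_lt_R0 _ hm).
  assert (0 < gu B H (s0 B H)).
  { rewrite gu_at_s0. apply Rmult_lt_0_compat; [apply Rdiv_lt_0_compat|]; lra. }
  pose proof (gu_antitone s (s0 B H) ltac:(lra) ltac:(lra) (Rle_refl _)). lra.
Qed.

Lemma gu_first_zero :
  zu B H (s0 B H) >= z0 B H -> exists sb, 0 < sb <= s0 B H /\ gu B H sb = 0.
Proof.
  intros hz.
  assert (hm : 0 < 1 - B ^ 2) by nra. pose proof (sqrt_lt_R0 _ hm).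
  assert (hG : gu B H (s0 B H) <= 0).
  { rewrite gu_at_s0. assert (0 < B / sqrt (1 - B ^ 2)) by (apply Rdiv_lt_0_compat; lra).
    nra. }
  assert (hc : continuity (gu B H)).
  { intro s. apply continuity_pt_filterlim.
    apply (ex_derive_continuous (K := R_AbsRing) (V := R_NormedModule)).
    eexists. apply gu_derive. }
  pose proof gu_at_zero. pose proof s0_pos.
  destruct (IVT_cor (gu B H) 0 (s0 B H) hc ltac:(lra) ltac:(nra)) as [sb [[sb1 sb2] hsb]].
  exists sb. split; [|exact hsb].
  split; [|exact sb2]. destruct (Req_dec sb 0) as [e|e]; [rewrite e in hsb|]; lra.
Qed.

Lemma support_function (s : R) : zu B H s * xp s - xu B H s * zp s = - zp s * gu B H s.
Proof. rewrite gu_closed. pose proof (zp_pos s). field. lra. Qed.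

(** z x' >= 0 on [-s0, s0] (both factors change sign at 0). *)
Lemma zu_xp_nonneg (s : R) : - s0 B H <= s <= s0 B H -> 0 <= zu B H s * xp s.
Proof.
  intros hs. destruct (Rle_lt_dec 0 s) as [h|h].
  - pose proof (xp_nonneg s ltac:(lra)).
    destruct (Req_dec s 0) as [->|e]; [rewrite zu_zero; lra|].
    pose proof (zu_pos s ltac:(lra)). nra.
  - pose proof (xp_nonneg (- s) ltac:(lra)). pose proof (zu_pos (- s) ltac:(lra)).
    rewrite xp_odd, zu_odd in *. nra.
Qed.

Lemma radius_increasing (a b : R) : 0 <= a -> a < b -> b <= s0 B H ->
  xu B H a ^ 2 + zu B H a ^ 2 < xu B H b ^ 2 + zu B H b ^ 2.
Proof.
  intros ha hab hb.
  assert (Hd : forall u, is_derive (fun u => xu B H u ^ 2 + zu B H u ^ 2) u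
                 (2 * (xu B H u * xp u + zu B H u * zp u))).
  { intro u.
    assert (E1 : Derive (fun u => xu B H u) u = xp u) by apply is_derive_unique, xu_derive.
    assert (E2 : Derive (fun u => zu B H u) u = zp u) by apply is_derive_unique, zu_derive.
    auto_derive.
    - split; [eexists; apply xu_derive|]. split; [eexists; apply zu_derive|exact I].
    - rewrite E1, E2. ring. }
  destruct (mvt _ _ a b Hd hab) as [c [[c1 c2] E]].
  pose proof (xu_pos c). pose proof (xp_pos c ltac:(lra)).
  pose proof (zu_pos c ltac:(lra)). pose proof (zp_pos c).
  assert (0 < 2 * (xu B H c * xp c + zu B H c * zp c)) by nra.
  nra.
Qed.

Lemma radius_even (s : R) :
  xu B H (- s) ^ 2 + zu B H (- s) ^ 2 = xu B H s ^ 2 + zu B H s ^ 2.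
Proof. rewrite xu_even, zu_odd. ring. Qed.

Section FirstZero.
Variable sb : R.
Hypothesis hsb : 0 < sb <= s0 B H.
Hypothesis gu_sb : gu B H sb = 0.

Lemma gu_nonneg_between (s : R) : - sb <= s <= sb -> 0 <= gu B H s.
Proof.
  intros hs. destruct (Rle_lt_dec 0 s) as [h|h].
  - pose proof (gu_antitone s sb h ltac:(lra) ltac:(lra)). lra.
  - rewrite <- gu_even. pose proof (gu_antitone (- s) sb ltac:(lra) ltac:(lra) ltac:(lra)). lra.
Qed.

Lemma inside_ball (s : R) : - sb < s < sb ->
  xu B H s ^ 2 + zu B H s ^ 2 < xu B H sb ^ 2 + zu B H sb ^ 2.
Proof.
  intros hs. destruct (Rle_lt_dec 0 s) as [h|h].
  - apply radius_increasing; lra.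
  - rewrite <- radius_even. apply radius_increasing; lra.
Qed.

Lemma free_boundary_annulus :
  free_boundary_CMC_annulus_rev (xu B H) (zu B H) sb H
    (sqrt (xu B H sb ^ 2 + zu B H sb ^ 2)).
Proof.
  pose proof (xu_pos sb).
  set (R0 := sqrt (xu B H sb ^ 2 + zu B H sb ^ 2)).
  assert (hR0sq : R0 ^ 2 = xu B H sb ^ 2 + zu B H sb ^ 2) by (apply pow2_sqrt; nra).
  assert (hR0 : 0 < R0) by (apply sqrt_lt_R0; nra).
  pose proof (rev_position _ _ _ _ xu_derive zu_derive) as pos.
  unfold free_boundary_CMC_annulus_rev; cbv zeta.
  split; [lra|]. split; [exact hR0|]. split; [intros; apply xu_pos|].
  split.
  { intros s1 s2 _ _ _ hz.
    destruct (Rtotal_order s1 s2) as [h|[h|h]]; [|exact h|];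
      apply zu_increasing in h; lra. }
  split.
  { intros s th _.
    exact (rev_normal_frame _ _ _ _ xu_derive zu_derive unit_speed_profile xu_pos s th). }
  split.
  { intros s th _.
    rewrite (rev_meanH _ _ _ _ _ _ xu_derive zu_derive xp_derive zp_derive
               unit_speed_profile xu_pos).
    apply principal_curvatures. }
  split.
  { intros s th hs. rewrite (proj1 (pos s th)), hR0sq. apply inside_ball, hs. }
  split.
  { intro th. rewrite !(proj1 (pos _ th)), radius_even, hR0sq. split; reflexivity. }
  intro th. rewrite !(proj2 (pos _ th)), !support_function, gu_even, gu_sb.
  split; ring.
Qed.

(** The pinching estimate |Phi|^2 <X,N>^2 <= (2 + H <X,N>)^2 / 2 on the annulus:
    with a = - H <X, N> = H z' g one has 0 <= a <= H x z' = 1 - B cos (H s). *)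
Lemma pinching_estimate (s th : R) : - sb <= s <= sb ->
  let X := rev (xu B H) (zu B H) in
  let N := revN (xu B H) (zu B H) in
  normPhi2 X N s th * (dot (X s th) (N s th)) ^ 2
    <= / 2 * (2 + H * dot (X s th) (N s th)) ^ 2.
Proof.
  intros hs. cbv zeta.
  rewrite (rev_normPhi2 _ _ _ _ _ _ xu_derive zu_derive xp_derive zp_derive
             unit_speed_profile xu_pos), (proj2 (principal_curvatures s)),
          (proj2 (rev_position _ _ _ _ xu_derive zu_derive s th)).
  pose proof (zp_pos s). pose proof (rho_pos s).
  set (a := H * zp s * gu B H s).
  assert (ea : a = H * (xu B H s * zp s) - H * (zu B H s * xp s)).
  { unfold a. replace (H * zp s * gu B H s) with (- H * (- zp s * gu B H s)) by ring.
    rewrite <- support_function. ring. }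
  assert (hp : zu B H s * xp s - xu B H s * zp s = - a / H) by (rewrite ea; field; lra).
  assert (ha : 0 <= a <= 1 - B * cos (H * s)).
  { split.
    - unfold a. pose proof (gu_nonneg_between s hs). apply Rmult_le_pos; nra.
    - rewrite <- support_identity, ea.
      pose proof (zu_xp_nonneg s ltac:(lra)). nra. }
  pose proof (pinching_inequality B (cos (H * s)) a hB (COS_bound _) ha) as PI2.
  rewrite <- rho_sq in PI2. rewrite hp.
  replace ((H * (1 - B ^ 2) / rho s ^ 2) ^ 2 / 2 * (- a / H) ^ 2)
    with (/ 2 * ((1 - B ^ 2) * a / rho s ^ 2) ^ 2) by (field; lra).
  replace (2 + H * (- a / H)) with (2 - a) by (field; lra).
  lra.
Qed.

End FirstZero.
End Unduloid.

Theorem proposition3p4 (B H : R) (hB0 : 0 < B) (hB1 : B < 1) (hH : 0 < H) :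
  (zu B H (s0 B H) < z0 B H ->
     forall s, 0 < s < s0 B H -> gu B H s > 0) /\
  (zu B H (s0 B H) >= z0 B H ->
     exists sb, 0 < sb <= s0 B H /\
       gu B H sb = 0 /\ gu B H (- sb) = 0 /\
       let R0 := sqrt (xu B H sb ^ 2 + zu B H sb ^ 2) in
       free_boundary_CMC_annulus_rev (xu B H) (zu B H) sb H R0 /\
       (forall s th, - sb <= s <= sb ->
          let X := rev (xu B H) (zu B H) in
          let N := revN (xu B H) (zu B H) in
          normPhi2 X N s th * (dot (X s th) (N s th)) ^ 2
            <= / 2 * (2 + H * dot (X s th) (N s th)) ^ 2)).
Proof.
  assert (hB : 0 < B < 1) by lra.
  split; [exact (gu_pos_first_arc B H hB hH)|].
  intros hz. destruct (gu_first_zero B H hB hH hz) as [sb [hsb hg]].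
  exists sb. split; [exact hsb|]. split; [exact hg|].
  split; [rewrite gu_even; assumption|].
  split.
  - exact (free_boundary_annulus B H hB hH sb hsb hg).
  - intros s th hs. exact (pinching_estimate B H hB hH sb hsb hg s th hs).
Qed.
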